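(* Let $(\mathcal S,\mathcal A,P,R,\rho)$ be a finite Episodic Learning Process with terminal set $\mathcal S_\bot$, and let $\gamma:\mathcal S\to[0,1]$ be any discounting function such that $\gamma(s)<1$ for every terminal state $s\in\mathcal S_\bot$. Then: (1) $\mathcal B^\gamma$ has a unique fixed point in $\mathcal Q$, i.e. the equation $Q=\mathcal B^\gamma Q$ has exactly one solution $Q\in\mathcal Q$; (2) this fixed point equals $\lim_{n\to\infty}(\mathcal B^\gamma)^n Q$ for every $Q\in\mathcal Q$; (3) when $\gamma=\gamma_{\mathrm{epi}}$, the fixed point $Q^*$ of $\mathcal B^{\gamma_{\mathrm{epi}}}$ is an optimal Q-function: every policy $\pi^*$ with $\pi^*(a|s)>0$ only if $Q^*(s,a)=\max_{\bar a}Q^*(s,\bar a)$ satisfies $J(\pi^* )=\max_\pi J(\pi)$.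
   Context: A finite Episodic Learning Process (ELP) is a tuple $(\mathcal S,\mathcal A,P,R,\rho)$ with finite state space $\mathcal S$, finite action space $\mathcal A$, reward function $R:\mathcal S\to\mathbb R$, transition probabilities $P(s'|s,a)$, distribution $\rho$ on $\mathcal S$, and a nonempty set of terminal states $\mathcal S_\bot\subseteq\mathcal S$. A policy $\pi$ assigns to each $s$ a distribution $\pi(\cdot|s)$ on $\mathcal A$. Running $\pi$ gives a process $S_0,A_0,S_1,A_1,\dots$ with $S_0$ a fixed terminal state, $A_t\sim\pi(\cdot|S_t)$, $S_{t+1}\sim P(\cdot|S_t,A_t)$; write $\mathbb P_\pi,\mathbb E_\pi$. The termination time is $T=\inf\{t\ge1:S_t\in\mathcal S_\bot\}$. The ELP conditions are: (i) $\mathbb E_\pi[T]<\infty$ for every policy $\pi$; (ii) $P(s'|s,a)=\rho(s')$ for all $s\in\mathcal S_\bot$, $a\in\mathcal A$, $s'\in\mathcal S$; (iii) every state of $\mathcal S$ is reachable, i.e. for each $s$ there exist a policy $\pi$ and $t\ge1$ with $\mathbb P_\pi(S_t=s)>0$. The objective is $J(\pi)=\mathbb E_\pi[\sum_{t=1}^T R(S_t)]$; a policy is optimal if it maximizes $J$ over all policies. $\mathcal Q$ denotes the set of all functions $Q:\mathcal S\times\mathcal A\to\mathbb R$. For $\gamma:\mathcal S\to[0,1]$, the generalized Bellman optimality operator is $\mathcal B^\gamma Q(s,a)=\sum_{s'\in\mathcal S}P(s'|s,a)\big(R(s')+\gamma(s')\max_{a'\in\mathcal A}Q(s',a')\big)$.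 The episodic discounting function is $\gamma_{\mathrm{epi}}(s)=1$ if $s\notin\mathcal S_\bot$ and $0$ if $s\in\mathcal S_\bot$. A Q-function $Q$ is an optimal Q-function if every $Q$-greedy policy (one with $\pi(a|s)>0$ only if $Q(s,a)=\max_{\bar a}Q(s,\bar a)$) is optimal. *)

From HB Require Import structures.
From mathcomp Require Import all_boot all_order all_algebra.
From mathcomp Require Import all_classical all_reals all_analysis.
Set Implicit Arguments. Unset Strict Implicit. Unset Printing Implicit Defensive.
Import Order.TTheory GRing.Theory Num.Theory numFieldNormedType.Exports.
Local Open Scope ring_scope.

Section ELP.
Variables (R : realType) (S A : finType).
(* transition kernel P s a s' = P(s'|s,a); reward r; initial distribution rho;
   terminal set term; s0 = the fixed terminal state S_0 *)
Variables (P : S -> A -> S -> R) (r : S -> R) (rho : S -> R) (term : {set S}) (s0 : S).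

Definition is_distr (d : S -> R) := (forall s, 0 <= d s) /\ \sum_s d s = 1.

Definition is_policy (pi : S -> A -> R) :=
  forall s, (forall a, 0 <= pi s a) /\ \sum_a pi s a = 1.

Definition step (pi : S -> A -> R) (s s' : S) : R := \sum_a pi s a * P s a s'.

(* probability of the finite trajectory prefix S_1 = p_1, ..., S_t = p_t,
   starting from S_0 = prev *)
Fixpoint path_prob (pi : S -> A -> R) (prev : S) (p : seq S) : R :=
  match p with
  | [::] => 1
  | s :: p' => step pi prev s * path_prob pi s p'
  end.

(* P_pi(S_t = s), t >= 1 *)
Definition prob_state (pi : S -> A -> R) (t : nat) (s : S) : R :=
  \sum_(p : t.-tuple S | last s0 p == s) path_prob pi s0 p.

(* the event {T >= t} for t >= 1: S_1, ..., S_{t-1} are non-terminal *)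
Definition alive (t : nat) (p : seq S) : bool :=
  all (fun s => s \notin term) (take t.-1 p).

Definition prob_T_ge (pi : S -> A -> R) (t : nat) : R :=
  \sum_(p : t.-tuple S | alive t p) path_prob pi s0 p.

(* E_pi[T] < oo, via E[T] = sum_{t>=1} P(T >= t) (series of nonnegative terms) *)
Definition finite_expected_T (pi : S -> A -> R) : Prop :=
  cvgn (fun n => \sum_(1 <= t < n) prob_T_ge pi t).

Definition exp_reward_at (pi : S -> A -> R) (t : nat) : R :=
  \sum_(p : t.-tuple S | alive t p) path_prob pi s0 p * r (last s0 p).

(* J(pi) = E_pi[sum_{t=1}^T R(S_t)] = sum_{t>=1} E_pi[R(S_t) 1{T >= t}] *)
Definition J (pi : S -> A -> R) : R :=
  limn (fun n => \sum_(1 <= t < n) exp_reward_at pi t).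

Definition is_ELP : Prop :=
  [/\ ((forall s a, is_distr (P s a)) /\ is_distr rho),
      term != finset.set0 /\ s0 \in term,
      (forall pi, is_policy pi -> finite_expected_T pi),
      (forall s a s', s \in term -> (P s a s' = rho s')) &
      (forall s, exists pi t, [/\ is_policy pi, (1 <= t)%N & 0 < prob_state pi t s])].

(* max_{a} Q(s,a) (A is nonempty in any ELP; 0 is a dummy value otherwise) *)
Definition maxA (Q : S -> A -> R) (s : S) : R :=
  match [pick a : A] with
  | Some a0 => \big[Num.max/Q s a0]_(a : A) Q s a
  | None => 0
  end.

Definition bellman (gamma : S -> R) (Q : S -> A -> R) : S -> A -> R :=
  fun s a => \sum_(s' : S) P s a s' * (r s' + gamma s' * maxA Q s').

Definition gamma_epi (s : S) : R := if s \in term then 0 else 1.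

Definition is_greedy (Q : S -> A -> R) (pi : S -> A -> R) :=
  is_policy pi /\ (forall s a, 0 < pi s a -> Q s a = maxA Q s).

Definition is_optimal (pi : S -> A -> R) :=
  is_policy pi /\ (forall pi', is_policy pi' -> J pi' <= J pi).

Definition optimal_Q (Q : S -> A -> R) :=
  forall pi, is_greedy Q pi -> is_optimal pi.

End ELP.

From Pilot Require Import Defs.
From HB Require Import structures.
From mathcomp Require Import all_boot all_order all_algebra.
From mathcomp Require Import all_classical all_reals all_analysis.
From mathcomp Require Import ring lra.
Set Implicit Arguments. Unset Strict Implicit. Unset Printing Implicit Defensive.
Import Order.TTheory GRing.Theory Num.Theory numFieldNormedType.Exports.
Local Open Scope ring_scope.
Local Open Scope classical_set_scope.

(* Let [max_discount n s] be the largest expected value of [gamma S_1 * ... * gamma S_n]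
   from [s]. At every state, [B^n Q1 - B^n Q2] is bounded by [max_discount n] times the sup
   distance of [Q1] and [Q2], so uniqueness, existence and convergence of the fixed point
   follow by a contraction argument as soon as [max_discount N < 1] for some [N]. The sets
   [{max_discount n = 1}] decrease and hence stabilise; if they stay nonempty, their states
   with [gamma = 1] form a trap of non-terminal states that some policy never leaves.
   Reachability lets a policy enter the trap with positive probability, after which
   [P(T >= t)] is bounded away from [0], contradicting [E[T] < oo].
   For [gamma_epi], the n-step lookahead of a policy from the fixed point [Q*] is at most
   [max_a Q*(s0, a)], with equality for [Q*]-greedy policies, and it differs from the
   partial return by a term that vanishes since [P(T >= t) -> 0]. *)

(* Bare [maxA] would resolve to the associativity lemma of [Order.max]. *)
Local Notation maxA := Defs.maxA.

Lemma big_tuple0 (R : nmodType) (S : finType) (F : seq S -> R) :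
  \sum_(p : 0.-tuple S) F p = F [::].
Proof. by rewrite (big_pred1 [tuple]) // => q; rewrite [q]tuple0 /= eqxx. Qed.

Lemma big_tupleS (R : nmodType) (S : finType) n (F : seq S -> R) :
  \sum_(p : n.+1.-tuple S) F p = \sum_(y : S) \sum_(q : n.-tuple S) F (y :: q).
Proof.
rewrite pair_big /=.
rewrite (reindex (fun yq : S * n.-tuple S => [tuple of yq.1 :: yq.2])) /=; last first.
  exists (fun p : n.+1.-tuple S => (thead p, [tuple of behead p])) => [[y q]|p] _ /=.
    by congr pair; apply: val_inj.
  by apply: val_inj => /=; case: p => -[|a s].
by apply: eq_bigr => -[y q].
Qed.

Lemma finset_decreasing_stable (T : finType) (E : nat -> {set T}) :
  (forall n, E n.+1 \subset E n) -> exists n, E n.+1 = E n.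
Proof.
move=> decE; apply: contrapT => /forallNP neqE.
have card_lt n : (#|E n.+1| < #|E n|)%N.
  by apply: proper_card; rewrite finset.properEneq decE andbT; apply/eqP.
have card_le n : (#|E n| + n <= #|E 0|)%N.
  elim: n => [|n IH]; first by rewrite addn0.
  by apply: leq_trans IH; rewrite addnS ltn_add2r.
by have := card_le #|E 0|.+1; rewrite addnS ltnNge leq_addl.
Qed.

Lemma bounded_away_from1 (R : realType) (T : finType) (f : T -> R) :
  (forall s, f s < 1) -> exists c, [/\ 0 <= c, c < 1 & forall s, f s <= c].
Proof.
move=> f_lt1; exists (\big[Num.max/0]_s f s); split.
- exact: bigmax_ge_id.
- by apply/bigmax_ltP; split.
- by move=> s; apply: le_bigmax.
Qed.

Section GeometricBounds.
Variables (R : realType) (c : R).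
Hypotheses (c_ge0 : 0 <= c) (c_lt1 : c < 1).

Lemma cvg_geometric_mul (M : R) : (fun k => c ^+ k * M) @ \oo --> 0.
Proof. by rewrite -(mul0r M); apply: cvgMr_tmp; apply: cvg_expr; rewrite ger0_norm. Qed.

Lemma le0_geometric (M x : R) : (forall k, x <= c ^+ k * M) -> x <= 0.
Proof.
by move=> x_le; apply: (ler_cvg_to (cvg_cst x) (cvg_geometric_mul M)); apply: nearW.
Qed.

(* The increments of [v] are dominated by a convergent geometric series. *)
Lemma geometric_cauchy_cvg (v : R^nat) (M : R) :
  (forall k m, (k <= m)%N -> `|v m - v k| <= c ^+ k * M) ->
  cvgn v /\ forall k, `|limn v - v k| <= c ^+ k * M.
Proof.
move=> osc; pose d k := v k.+1 - v k.
have osc_ge0 n : 0 <= c ^+ n * M := le_trans (normr_ge0 _) (osc n n (leqnn n)).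
have cvg_d : cvgn (series d).
  apply: normed_cvg; apply: (@series_le_cvg _ _ (geometric M c)) => [n|n|n|] /=.
  - exact: normr_ge0.
  - by rewrite mulrC.
  - by rewrite mulrC; apply: osc.
  - by apply: is_cvg_geometric_series; rewrite ger0_norm.
have vE n : v n = series d n + v 0.
  elim: n => [|n IH]; first by rewrite seriesEnat /= big_geq // add0r.
  by rewrite seriesSr addrAC -IH /d addrC subrK.
have cvg_v : cvgn v.
  rewrite (_ : v = series d + cst (v 0)); last by apply/funext => n; rewrite vE.
  by apply: is_cvgD => //; apply: is_cvg_cst.
split => // k; rewrite ler_norml; apply/andP; split.
- rewrite lerBrDr; apply: limr_ge => //; exists k => // m /= km.
  by have := osc _ _ km; rewrite ler_norml lerBrDr => /andP[].
- rewrite lerBlDr; apply: limr_le => //; exists k => // m /= km.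
  by have := osc _ _ km; rewrite ler_norml lerBlDr => /andP[].
Qed.

End GeometricBounds.

Lemma cvg_dominated0 (R : realType) (f g : nat -> R) (K : R) :
  g @ \oo --> 0 -> (forall n, `|f n| <= K * g n) -> f @ \oo --> 0.
Proof.
move=> g0 f_le; apply: (@squeeze_cvgr _ _ _ _ (fun n => - (K * g n)) (fun n => K * g n)).
- by apply: nearW => n; rewrite -ler_norml.
- by rewrite -oppr0 -(mulr0 K); apply: cvgN; apply: cvgMl_tmp.
- by rewrite -(mulr0 K); apply: cvgMl_tmp.
Qed.

Section MaxA.
Variables (R : realType) (S A : finType) (a0 : A).
Implicit Types (Q : S -> A -> R) (s : S).

Lemma maxA_ub Q s a : Q s a <= maxA Q s.
Proof. by rewrite /maxA; case: pickP => [b _|/(_ a)//]; apply: le_bigmax. Qed.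

Lemma maxA_attained Q s : exists a, maxA Q s = Q s a.
Proof.
rewrite /maxA; case: pickP => [b _|/(_ a0)//].
elim/big_ind: _ => [|x y [a1 ->] [a2 ->]|a _]; first by exists b.
- by rewrite /Order.max; case: ifP => _; [exists a2|exists a1].
- by exists a.
Qed.

Lemma maxA_lub Q s m : (forall a, Q s a <= m) -> maxA Q s <= m.
Proof. by move=> Q_le; have [a ->] := maxA_attained Q s. Qed.

Lemma maxA_dist Q1 Q2 s :
  `|maxA Q1 s - maxA Q2 s| <= maxA (fun s a => `|Q1 s a - Q2 s a|) s.
Proof.
pose D := maxA (fun s a => `|Q1 s a - Q2 s a|) s.
have le_D Q Q' : (forall a, `|Q s a - Q' s a| <= D) -> maxA Q s - maxA Q' s <= D.
  move=> QQ'; rewrite lerBlDl; apply: maxA_lub => a.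
  rewrite -[Q s a](subrK (Q' s a)) addrC; apply: lerD; first exact: maxA_ub.
  exact: le_trans (ler_norm _) (QQ' a).
have D_ub a : `|Q1 s a - Q2 s a| <= D by exact: (maxA_ub (fun s a => `|Q1 s a - Q2 s a|) s a).
rewrite ler_norml lerNl opprB; apply/andP; split; apply: le_D => // a.
by rewrite distrC.
Qed.

End MaxA.

Section Kernel.
Variables (R : realType) (S A : finType) (P : S -> A -> S -> R).
Hypothesis P_distr : forall s a, is_distr (P s a).

Lemma P_ge0 s a s' : 0 <= P s a s'. Proof. by case: (P_distr s a). Qed.

Lemma P_sum1 s a : \sum_s' P s a s' = 1. Proof. by case: (P_distr s a). Qed.

Lemma step_ge0 pi x y : is_policy pi -> 0 <= step P pi x y.
Proof.
by move=> pol; apply: sumr_ge0 => a _; rewrite mulr_ge0 ?P_ge0 //; case: (pol x).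
Qed.

Lemma path_prob_ge0 pi x p : is_policy pi -> 0 <= path_prob P pi x p.
Proof.
move=> pol; elim: p x => [|y p IH] x /=; first exact: ler01.
by rewrite mulr_ge0 ?step_ge0.
Qed.

End Kernel.

Section Contraction.
Variables (R : realType) (S A : finType) (a0 : A).
Variables (P : S -> A -> S -> R) (r gamma : S -> R).
Hypothesis P_distr : forall s a, is_distr (P s a).
Hypothesis gamma01 : forall s, 0 <= gamma s <= 1.

Local Notation B := (bellman P r gamma).

Let gamma_ge0 s : 0 <= gamma s. Proof. by case/andP: (gamma01 s). Qed.

Definition qdist (Q1 Q2 : S -> A -> R) (s : S) : R :=
  maxA (fun s a => `|Q1 s a - Q2 s a|) s.

Definition max_step (D : S -> R) (s : S) : R :=
  maxA (fun s a => \sum_s' P s a s' * (gamma s' * D s')) s.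

Definition max_discount (n : nat) : S -> R := iter n max_step (fun _ => 1).

Lemma qdist_ub Q1 Q2 s a : `|Q1 s a - Q2 s a| <= qdist Q1 Q2 s.
Proof. exact: (maxA_ub (fun s a => `|Q1 s a - Q2 s a|)). Qed.

Lemma qdist_ge0 Q1 Q2 s : 0 <= qdist Q1 Q2 s.
Proof. exact: le_trans (normr_ge0 _) (qdist_ub Q1 Q2 s a0). Qed.

Lemma qdist_lub Q1 Q2 K : (forall s a, `|Q1 s a - Q2 s a| <= K) ->
  forall s, qdist Q1 Q2 s <= K.
Proof. by move=> QK s; apply: (maxA_lub a0). Qed.

Lemma qdist_refl Q s : qdist Q Q s = 0.
Proof.
apply/eqP; rewrite eq_le qdist_ge0 andbT.
by apply: qdist_lub => s' a; rewrite subrr normr0.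
Qed.

Lemma qdist_triangle Q1 Q2 Q3 s : qdist Q1 Q3 s <= qdist Q1 Q2 s + qdist Q2 Q3 s.
Proof.
apply: (maxA_lub a0) => a /=.
by apply: le_trans (ler_distD (Q2 s a) _ _) _; apply: lerD; apply: qdist_ub.
Qed.

Lemma qdist_bounded Q1 Q2 : exists2 K, 0 <= K & forall s, qdist Q1 Q2 s <= K.
Proof.
exists (\sum_s qdist Q1 Q2 s); first by apply: sumr_ge0 => s _; apply: qdist_ge0.
move=> s; rewrite (bigD1 s) //= lerDl.
by apply: sumr_ge0 => ? _; apply: qdist_ge0.
Qed.

Lemma qdist_bellman Q1 Q2 s : qdist (B Q1) (B Q2) s <= max_step (qdist Q1 Q2) s.
Proof.
apply: (maxA_lub a0) => a /=; apply: le_trans (maxA_ub _ s a) => /=.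
rewrite -sumrB; apply: le_trans (ler_norm_sum _ _ _) _; apply: ler_sum => s' _.
rewrite -mulrBr normrM ger0_norm ?(P_ge0 P_distr) // ler_wpM2l ?(P_ge0 P_distr) //.
rewrite opprD addrACA subrr add0r -mulrBr normrM ger0_norm // ler_wpM2l //.
exact: (maxA_dist a0).
Qed.

Lemma max_step_scale D U k s : 0 <= k -> (forall s, D s <= k * U s) ->
  max_step D s <= k * max_step U s.
Proof.
move=> k0 DU; apply: (maxA_lub a0) => a /=.
apply: le_trans (ler_wpM2l k0 (maxA_ub _ s a)) => /=.
rewrite mulr_sumr; apply: ler_sum => s' _.
by rewrite [k * _]mulrCA ler_wpM2l ?(P_ge0 P_distr) // [k * _]mulrCA ler_wpM2l.
Qed.

Lemma max_step_ge0 D s : (forall s, 0 <= D s) -> 0 <= max_step D s.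
Proof.
move=> D0; apply: le_trans (maxA_ub _ s a0) => /=.
by apply: sumr_ge0 => s' _; rewrite !mulr_ge0 ?(P_ge0 P_distr).
Qed.

Lemma max_step_le1 D s : (forall s, 0 <= D s <= 1) -> max_step D s <= 1.
Proof.
move=> D01; apply: (maxA_lub a0) => a /=.
rewrite -(P_sum1 P_distr s a); apply: ler_sum => s' _; rewrite ler_piMr ?(P_ge0 P_distr) //.
by have := D01 s'; have := gamma01 s'; nra.
Qed.

Lemma max_discount01 n s : 0 <= max_discount n s <= 1.
Proof.
elim: n s => [|n IH] s /=; first by rewrite ler01 lexx.
rewrite max_step_le1 // andbT; apply: max_step_ge0 => s'.
by case/andP: (IH s').
Qed.

Lemma max_discount_succ_le n s : max_discount n.+1 s <= max_discount n s.
Proof.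
elim: n s => [|n IH] s; first by case/andP: (max_discount01 1 s).
by rewrite -[X in _ <= X]mul1r; apply: max_step_scale => // s'; rewrite mul1r IH.
Qed.

Lemma max_discount_succ_eq1 n s : max_discount n.+1 s = 1 ->
  exists a, forall s', 0 < P s a s' -> gamma s' = 1 /\ max_discount n s' = 1.
Proof.
rewrite [max_discount _ s]/= /max_step -/(max_discount n).
have [a ->] := maxA_attained a0 (fun s a => \sum_s' P s a s' * (gamma s' * max_discount n s')) s.
move=> /= sum1; exists a => s' Ps'.
have slack_ge0 s'' : 0 <= P s a s'' * (1 - gamma s'' * max_discount n s'').
  rewrite mulr_ge0 ?(P_ge0 P_distr) // subr_ge0.
  by have := gamma01 s''; have := max_discount01 n s''; nra.
have slack0 : \sum_s'' P s a s'' * (1 - gamma s'' * max_discount n s'') = 0.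
  under eq_bigr do rewrite mulrBr mulr1.
  by rewrite sumrB sum1 (P_sum1 P_distr) subrr.
have /eqP := @psumr_eq0P _ _ _ _ (fun s'' _ => slack_ge0 s'') slack0 s' isT.
rewrite mulf_eq0 (gt_eqF Ps') /= subr_eq0 => /eqP prod1.
by have := gamma01 s'; have := max_discount01 n s'; split; nra.
Qed.

Lemma qdist_iter Q1 Q2 K n s : 0 <= K -> (forall s, qdist Q1 Q2 s <= K) ->
  qdist (iter n B Q1) (iter n B Q2) s <= K * max_discount n s.
Proof.
move=> K0 QK; elim: n s => [|n IH] s /=; first by rewrite mulr1.
by apply: le_trans (qdist_bellman _ _ _) _; apply: max_step_scale.
Qed.

Lemma qdist_iter_le Q1 Q2 K n s : 0 <= K -> (forall s, qdist Q1 Q2 s <= K) ->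
  qdist (iter n B Q1) (iter n B Q2) s <= K.
Proof.
move=> K0 QK; apply: le_trans (qdist_iter n s K0 QK) _.
by rewrite ler_piMr //; case/andP: (max_discount01 n s).
Qed.

Section IterContraction.
Variables (N : nat) (c : R).
Hypotheses (c_ge0 : 0 <= c) (c_lt1 : c < 1).
Hypothesis discountN : forall s, max_discount N s <= c.

Lemma qdist_iter_geometric k n Q1 Q2 K s : (k * N <= n)%N -> 0 <= K ->
  (forall s, qdist Q1 Q2 s <= K) ->
  qdist (iter n B Q1) (iter n B Q2) s <= c ^+ k * K.
Proof.
elim: k n Q1 Q2 K s => [|k IH] n Q1 Q2 K s kNn K0 QK.
  by rewrite expr0 mul1r; apply: qdist_iter_le.
have Nn : (N <= n)%N by apply: leq_trans kNn; rewrite mulSn leq_addr.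
rewrite -(subnK Nn) iterD [iter _ B Q2]iterD exprSr -mulrA.
apply: IH; first by rewrite leq_subRL // addnC -mulSn.
- exact: mulr_ge0.
- move=> s'; apply: le_trans (qdist_iter N s' K0 QK) _.
  by rewrite mulrC ler_wpM2r.
Qed.

Lemma iterN_cauchy Q : exists2 M, 0 <= M & forall s a k m, (k <= m)%N ->
  `|iter (m * N) B Q s a - iter (k * N) B Q s a| <= c ^+ k * M.
Proof.
have [L L0 QL] := qdist_bounded (iter N B Q) Q.
have M0 : 0 <= L / (1 - c) by rewrite divr_ge0 // subr_ge0 ltW.
have orbit k s : qdist (iter (k * N) B Q) Q s <= L / (1 - c).
  elim: k s => [|k IH] s; first by rewrite mul0n qdist_refl.
  apply: le_trans (qdist_triangle _ (iter N B Q) _ _) _.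
  rewrite mulSn iterD.
  apply: le_trans (lerD (qdist_iter_geometric (k := 1) s _ M0 IH) (QL s)) _.
    by rewrite mul1n.
  by rewrite expr1 le_eqVlt; apply/orP; left; apply/eqP; field; rewrite subr_eq0 gt_eqF.
exists (L / (1 - c)) => // s a k m km.
rewrite -(subnKC km) mulnDl iterD; apply: le_trans (qdist_ub _ _ _ _) _.
exact: qdist_iter_geometric (leqnn _) M0 (orbit _).
Qed.

Lemma bellman_fixed_exists : exists Qs, B Qs = Qs.
Proof.
pose Q0 : S -> A -> R := fun _ _ => 0.
have [M M0 cauchy] := iterN_cauchy Q0.
pose Qs s a := limn (fun k => iter (k * N) B Q0 s a).
have close k s a : `|Qs s a - iter (k * N) B Q0 s a| <= c ^+ k * M.
  exact: (geometric_cauchy_cvg c_ge0 c_lt1 (cauchy s a)).2.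
have [L L0 QL] := qdist_bounded (B Q0) Q0.
exists Qs; apply/funext => s; apply/funext => a.
apply/eqP; rewrite -subr_eq0 -normr_le0.
apply: (le0_geometric c_ge0 c_lt1 (M := M + L + M)) => k; rewrite !mulrDr.
apply: le_trans (ler_distD (iter (k * N) B Q0 s a) _ _) _.
apply: lerD; last by rewrite distrC.
apply: le_trans (ler_distD (B (iter (k * N) B Q0) s a) _ _) _.
apply: lerD; apply: le_trans (qdist_ub _ _ _ _) _.
- apply: (qdist_iter_le 1); first by rewrite mulr_ge0 // exprn_ge0.
  by apply: qdist_lub.
- by rewrite -iterS iterSr; apply: qdist_iter_geometric.
Qed.

Lemma bellman_fixed_iter Qs n : B Qs = Qs -> iter n B Qs = Qs.
Proof. by move=> BQs; elim: n => //= n ->. Qed.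

Lemma bellman_fixed_unique Q1 Q2 : B Q1 = Q1 -> B Q2 = Q2 -> Q1 = Q2.
Proof.
move=> BQ1 BQ2; have [K K0 QK] := qdist_bounded Q1 Q2.
apply/funext => s; apply/funext => a; apply/eqP; rewrite -subr_eq0 -normr_le0.
apply: (le0_geometric c_ge0 c_lt1 (M := K)) => k.
rewrite -(bellman_fixed_iter (k * N) BQ1) -(bellman_fixed_iter (k * N) BQ2).
by apply: le_trans (qdist_ub _ _ _ _) _; apply: qdist_iter_geometric.
Qed.

Lemma bellman_iter_cvg Qs Q s a : B Qs = Qs ->
  (fun n => iter n B Q s a) @ \oo --> Qs s a.
Proof.
move=> BQs; have [K K0 QK] := qdist_bounded Qs Q.
apply/cvgrPdist_le => eps eps0.
move/cvgrPdist_le: (cvg_geometric_mul c_ge0 c_lt1 K) => /(_ eps eps0) [k0 _ small].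
exists (k0 * N)%N => // n /= k0Nn.
have := small k0 (leqnn _); rewrite sub0r normrN ger0_norm ?mulr_ge0 ?exprn_ge0 //.
apply: le_trans; rewrite -{1}(bellman_fixed_iter n BQs).
by apply: le_trans (qdist_ub _ _ _ _) _; apply: qdist_iter_geometric.
Qed.

End IterContraction.

End Contraction.

Section AliveExpectation.
Variables (R : realType) (S A : finType) (P : S -> A -> S -> R) (term : {set S}).
Hypothesis P_distr : forall s a, is_distr (P s a).

Definition alive_exp (pi : S -> A -> R) (t : nat) (x : S) (g : S -> R) : R :=
  \sum_(p : t.-tuple S | alive term t p) path_prob P pi x p * g (last x p).

Lemma alive_exp0 pi x g : alive_exp pi 0 x g = g x.
Proof.
rewrite /alive_exp big_mkcond.
by rewrite (big_tuple0 (fun p => if alive term 0 p then path_prob P pi x p * g (last x p) else 0)) /= mul1r.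
Qed.

Lemma alive_expS pi t x g : alive_exp pi t.+1 x g =
  \sum_y step P pi x y * (if t is 0 then g y else (y \notin term)%:R * alive_exp pi t y g).
Proof.
rewrite /alive_exp big_mkcond.
rewrite (@big_tupleS _ _ t (fun p => if alive term t.+1 p then path_prob P pi x p * g (last x p) else 0)).
apply: eq_bigr => y _; case: t => [|t].
  by rewrite (big_tuple0 (fun q => if alive term 1 (y :: q) then path_prob P pi x (y :: q) * g (last x (y :: q)) else 0)) /= mulr1.
have aliveE (q : seq S) : alive term t.+2 (y :: q) = (y \notin term) && alive term t.+1 q by [].
case: (boolP (y \in term)) => yT /=.
  by rewrite mul0r mulr0 big1 // => q _; rewrite aliveE yT.
rewrite mul1r mulr_sumr [RHS]big_mkcond; apply: eq_bigr => q _; rewrite aliveE yT /=.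
by case: ifP => _; rewrite ?mulrA ?mulr0.
Qed.

Lemma alive_exp1 pi x g : alive_exp pi 1 x g = \sum_y step P pi x y * g y.
Proof. by rewrite alive_expS. Qed.

Lemma alive_exp_ge0 pi t x g : is_policy pi -> (forall y, 0 <= g y) -> 0 <= alive_exp pi t x g.
Proof. by move=> pol g0; apply: sumr_ge0 => p _; rewrite mulr_ge0 ?path_prob_ge0. Qed.

Lemma alive_exp_norm_le pi t x g K : is_policy pi -> (forall y, `|g y| <= K) ->
  `|alive_exp pi t x g| <= K * alive_exp pi t x (fun _ => 1).
Proof.
move=> pol gK; rewrite /alive_exp mulr_sumr.
apply: le_trans (ler_norm_sum _ _ _) _; apply: ler_sum => p _.
by rewrite normrM ger0_norm ?path_prob_ge0 // mulr1 mulrC ler_wpM2r ?path_prob_ge0.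
Qed.

Lemma alive_exp_prefix pi q x m : is_policy pi -> all (fun s => s \notin term) q ->
  path_prob P pi x q * alive_exp pi m (last x q) (fun _ => 1) <=
  alive_exp pi (size q + m) x (fun _ => 1).
Proof.
move=> pol; elim: q x => [|y q IH] x /=; first by rewrite mul1r.
move=> /andP[yT qT]; rewrite addSn alive_expS (bigD1 y) //=.
have alive_y : alive_exp pi (size q + m) y (fun _ => 1) =
    if (size q + m)%N is 0 then 1 else (y \notin term)%:R * alive_exp pi (size q + m) y (fun _ => 1).
  by case: (size q + m)%N => [|k]; rewrite ?alive_exp0 // yT mul1r.
rewrite -alive_y -mulrA; apply: ler_wpDr.
  apply: sumr_ge0 => y' _; rewrite mulr_ge0 ?step_ge0 //.
  by case: (size q + m)%N => [|k]; rewrite ?ler01 // mulr_ge0 ?ler0n ?alive_exp_ge0.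
by rewrite ler_wpM2l ?step_ge0 ?IH.
Qed.

End AliveExpectation.

Section Episodic.
Variables (R : realType) (S A : finType).
Variables (P : S -> A -> S -> R) (rho : S -> R) (term : {set S}) (s0 : S).
Hypothesis P_distr : forall s a, is_distr (P s a).
Hypothesis P_term : forall s a s', s \in term -> P s a s' = rho s'.
Hypothesis s0_term : s0 \in term.
Hypothesis finite_T : forall pi, is_policy pi -> finite_expected_T P term s0 pi.

Lemma prob_T_ge_alive_exp pi t :
  prob_T_ge P term s0 pi t = alive_exp P term pi t s0 (fun _ => 1).
Proof. by apply: eq_bigr => p _; rewrite mulr1. Qed.

Lemma cvg_series_prob_T_ge pi : is_policy pi ->
  cvgn (series (fun t => prob_T_ge P term s0 pi t.+1)).
Proof.
move=> /finite_T /cvg_ex [l sum_l]; apply/cvg_ex; exists l.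
rewrite (_ : series _ = [sequence \sum_(1 <= t < n.+1) prob_T_ge P term s0 pi t]_n).
  by rewrite (cvg_shiftS (fun n => \sum_(1 <= t < n) prob_T_ge P term s0 pi t)).
by apply/funext => n; rewrite seriesEnat /= big_add1.
Qed.

Lemma prob_T_ge_cvg0 pi : is_policy pi ->
  (fun t => prob_T_ge P term s0 pi t.+1) @ \oo --> 0.
Proof. by move=> /cvg_series_prob_T_ge /cvg_series_cvg_0. Qed.

Lemma step_term pi x y : is_policy pi -> x \in term -> step P pi x y = rho y.
Proof.
move=> pol xT; rewrite /step (eq_bigr (fun a => pi x a * rho y)) => [|a _]; last by rewrite P_term.
by rewrite -mulr_suml; case: (pol x) => _ ->; rewrite mul1r.
Qed.

Section Trap.
Variables (C : {set S}) (f : S -> A).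
Hypothesis C_nonterm : forall s, s \in C -> s \notin term.
Hypothesis C_closed : forall s s', s \in C -> 0 < P s (f s) s' -> s' \in C.

Definition trap_policy (pi : S -> A -> R) (s : S) (a : A) : R :=
  if s \in C then (a == f s)%:R else pi s a.

Lemma trap_policy_is_policy pi : is_policy pi -> is_policy (trap_policy pi).
Proof.
move=> pol s; rewrite /trap_policy; have [sC|sC] /= := boolP (s \in C); last exact: pol.
split=> [a|]; first exact: ler0n.
by rewrite (bigD1 (f s)) //= eqxx big1 ?addr0 // => a /negbTE ->.
Qed.

Lemma step_trap_out pi x y : x \notin C -> step P (trap_policy pi) x y = step P pi x y.
Proof. by move=> xC; apply: eq_bigr => a _; rewrite /trap_policy (negbTE xC). Qed.

Lemma step_trap_in pi x y : x \in C -> step P (trap_policy pi) x y = P x (f x) y.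
Proof.
move=> xC; rewrite /step (bigD1 (f x)) //= /trap_policy xC eqxx mul1r big1 ?addr0 //.
by move=> a /negbTE ->; rewrite mul0r.
Qed.

Lemma alive_exp_trap pi t x : x \in C ->
  alive_exp P term (trap_policy pi) t x (fun _ => 1) = 1.
Proof.
elim: t x => [|t IH] x xC; first by rewrite alive_exp0.
rewrite alive_expS -[RHS](P_sum1 P_distr x (f x)); apply: eq_bigr => y _.
rewrite step_trap_in //; have := P_ge0 P_distr x (f x) y.
rewrite le_eqVlt => /predU1P[<-|Pxy_gt0]; first by rewrite !mul0r.
have yC := C_closed xC Pxy_gt0.
by case: t IH => [|t] IH; rewrite ?mulr1 // (C_nonterm yC) (IH _ yC) mulr1 /= mulr1.
Qed.

(* A positive path of [pi] into [C] yields a positive path of [trap_policy pi] into [C]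
   that avoids [term]: cut it after its last terminal state, from which the chain restarts
   with law [rho], exactly as from [s0]. *)
Lemma trap_entry pi q x : is_policy pi -> x \notin C -> 0 < path_prob P pi x q ->
  last x q \in C -> exists y q', [/\ all (fun s => s \notin term) (y :: q'), last y q' \in C &
    0 < path_prob P (trap_policy pi) x (y :: q') \/ 0 < path_prob P (trap_policy pi) s0 (y :: q')].
Proof.
move=> pol; have tpol := trap_policy_is_policy pol.
elim: q x => [|y q IH] x xC /=; first by move=> _ xC'; rewrite xC' in xC.
move=> pos lastC.
have [st_gt0 q_gt0] : 0 < step P pi x y /\ 0 < path_prob P pi y q.
  move: pos; rewrite lt0r mulf_eq0 negb_or => /andP[/andP[st0 q0] _].
  by rewrite !lt0r st0 q0 step_ge0 ?path_prob_ge0.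
have [yC|yC] := boolP (y \in C).
  by exists y, [::]; rewrite /= C_nonterm // mulr1 step_trap_out //; split => //; left.
have [y' [q' [q'T lastC' pos']]] := IH y yC q_gt0 lastC.
have [yT|yT] := boolP (y \in term).
  exists y', q'; split => //; right; case: pos' => //=.
  by rewrite (step_term y' tpol yT) (step_term y' tpol s0_term).
case: pos' => pos'; last by exists y', q'; split => //; right.
exists y, (y' :: q'); split => //=; first by rewrite yT.
by left; rewrite step_trap_out // mulr_gt0.
Qed.

Lemma prob_state_trap pi t z : is_policy pi -> z \in C -> prob_state P s0 pi t z = 0.
Proof.
move=> pol zC; apply/eqP; apply: contraT => /eqP nz.
have [p /andP[/eqP pz p_gt0]] := psumr_neq0P (fun (p : t.-tuple S) _ => path_prob_ge0 P_distr s0 p pol) nz.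
have s0C : s0 \notin C by apply: contraL s0_term; apply: C_nonterm.
have [y [q [qT lastC pos]]] := trap_entry pol s0C p_gt0 (etrans (congr1 _ pz) zC).
have {pos} pos : 0 < path_prob P (trap_policy pi) s0 (y :: q) by case: pos.
have tpol := trap_policy_is_policy pol.
set c0 := path_prob P (trap_policy pi) s0 (y :: q) in pos *.
have surv m : c0 <= prob_T_ge P term s0 (trap_policy pi) (size q + m).+1.
  rewrite prob_T_ge_alive_exp -addSn; apply: le_trans (alive_exp_prefix P_distr s0 m tpol qT).
  by rewrite alive_exp_trap // mulr1.
suff : c0 <= 0 by rewrite leNgt pos.
apply: (ler_cvg_to (cvg_cst c0) (prob_T_ge_cvg0 tpol)).
by exists (size q) => // n /= qn; rewrite -(subnKC qn).
Qed.

End Trap.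

Variables (a0 : A) (gamma : S -> R).
Hypothesis gamma01 : forall s, 0 <= gamma s <= 1.
Hypothesis gamma_term : forall s, s \in term -> gamma s < 1.
Hypothesis reachable : forall s, exists pi t,
  [/\ is_policy pi, (1 <= t)%N & 0 < prob_state P s0 pi t s].

Lemma max_discount_lt1 : exists N, forall s, max_discount P gamma N s < 1.
Proof.
have md01 := max_discount01 a0 P_distr gamma01.
pose E n := [set s | max_discount P gamma n s == 1]%SET.
have [n En] : exists n, E n.+1 = E n.
  apply: finset_decreasing_stable => n; apply/fintype.subsetP => s; rewrite !inE => /eqP md1.
  case/andP: (md01 n s) => _ le1; rewrite eq_le le1 -md1 /=.
  exact: max_discount_succ_le.
have [E0|[s1 s1E]] := set_0Vmem (E n).
  exists n => s; rewrite lt_neqAle; case/andP: (md01 n s) => _ ->; rewrite andbT.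
  apply/negP => md1; have : s \in E n by rewrite inE md1.
  by rewrite E0 inE.
pose C := [set s in E n | gamma s == 1]%SET.
have closed s : s \in E n -> exists a, forall s', 0 < P s a s' -> s' \in C.
  rewrite -En inE => /eqP /(max_discount_succ_eq1 a0 P_distr gamma01) [a Ha].
  by exists a => s' /Ha [g1 md1]; rewrite !inE g1 md1 !eqxx.
pose f s := if [pick a | [forall s', (0 < P s a s') ==> (s' \in C)]] is Some a then a else a0.
have f_closed s s' : s \in E n -> 0 < P s (f s) s' -> s' \in C.
  move=> /closed [a Ha]; rewrite /f; case: pickP => [b /forallP/(_ s')/implyP //|/(_ a)].
  move=> /negbT/negP nf; exfalso; apply: nf.
  by apply/forallP => s''; apply/implyP; apply: Ha.
have C_nonterm s : s \in C -> s \notin term.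
  by rewrite !inE => /andP[_ /eqP g1]; apply/negP => /gamma_term; rewrite g1 ltxx.
have C_closed s s' : s \in C -> 0 < P s (f s) s' -> s' \in C.
  by rewrite inE => /andP[sE _]; apply: f_closed.
have [z /andP[_ z_pos]] : exists z, true && (0 < P s1 (f s1) z).
  apply: psumr_neq0P => [z _|]; first exact: (P_ge0 P_distr).
  by rewrite (P_sum1 P_distr); apply/eqP; rewrite oner_neq0.
have [pi [t [pol _]]] := reachable z.
by rewrite (prob_state_trap C_nonterm C_closed _ pol (f_closed _ _ s1E z_pos)) ltxx.
Qed.

End Episodic.

Section Optimality.
Variables (R : realType) (S A : finType).
Variables (P : S -> A -> S -> R) (r : S -> R) (term : {set S}) (s0 : S) (gamma : S -> R).
Hypothesis P_distr : forall s a, is_distr (P s a).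
Hypothesis finite_T : forall pi, is_policy pi -> finite_expected_T P term s0 pi.
Hypothesis gamma_epiE : forall s, gamma s = gamma_epi R term s.
Variable Qs : S -> A -> R.
Hypothesis Qs_fixed : bellman P r gamma Qs = Qs.

Let V s := maxA Qs s.
Let gV s := gamma s * V s.

Let gamma_nonterm y : gamma y = (y \notin term)%:R.
Proof. by rewrite gamma_epiE /gamma_epi; case: (y \in term). Qed.

Let gamma_ge0 y : 0 <= gamma y.
Proof. by rewrite gamma_nonterm ler0n. Qed.

Definition one_step_value pi x := \sum_y step P pi x y * (r y + gV y).

Lemma one_step_valueE pi x : one_step_value pi x = \sum_a pi x a * Qs x a.
Proof.
rewrite /one_step_value /step; under eq_bigr do rewrite mulr_suml.
rewrite exchange_big; apply: eq_bigr => a _ /=; rewrite -Qs_fixed mulr_sumr.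
by apply: eq_bigr => y _; rewrite mulrA.
Qed.

Lemma one_step_value_le pi x : is_policy pi -> one_step_value pi x <= V x.
Proof.
move=> pol; rewrite one_step_valueE; case: (pol x) => pi_ge0 pi_sum1.
apply: le_trans (_ : _ <= \sum_a pi x a * V x) _.
  by apply: ler_sum => a _; rewrite ler_wpM2l // maxA_ub.
by rewrite -mulr_suml pi_sum1 mul1r.
Qed.

Lemma one_step_value_greedy pi x : is_greedy Qs pi -> one_step_value pi x = V x.
Proof.
move=> [pol greedy]; rewrite one_step_valueE; case: (pol x) => pi_ge0 pi_sum1.
rewrite -[RHS]mul1r -pi_sum1 mulr_suml; apply: eq_bigr => a _.
have := pi_ge0 a; rewrite le_eqVlt => /predU1P[<-|pi_gt0]; first by rewrite !mul0r.
by rewrite greedy.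
Qed.

Definition lookahead pi n x :=
  \sum_(0 <= t < n.+1) alive_exp P term pi t.+1 x r + alive_exp P term pi n.+1 x gV.

Lemma lookahead0 pi x : lookahead pi 0 x = one_step_value pi x.
Proof.
by rewrite /lookahead big_nat1 !alive_exp1 -big_split /=; apply: eq_bigr => y _; rewrite mulrDr.
Qed.

Lemma lookaheadS pi n x : lookahead pi n.+1 x =
  alive_exp P term pi 1 x r + \sum_y step P pi x y * (gamma y * lookahead pi n y).
Proof.
rewrite /lookahead big_nat_recl // -addrA; congr (_ + _).
rewrite (eq_bigr (fun t => \sum_y step P pi x y *
    ((y \notin term)%:R * alive_exp P term pi t.+1 y r))) => [|t _]; last by rewrite alive_expS.
rewrite exchange_big /= alive_expS -big_split /=; apply: eq_bigr => y _.
by rewrite gamma_nonterm !mulrDr !mulr_sumr.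
Qed.

Lemma lookahead_le pi n x : is_policy pi -> lookahead pi n x <= one_step_value pi x.
Proof.
move=> pol; elim: n x => [|n IH] x; first by rewrite lookahead0.
rewrite lookaheadS -lookahead0 /lookahead big_nat1 alive_exp1 [alive_exp _ _ _ 1 x gV]alive_exp1 lerD2l.
apply: ler_sum => y _; rewrite ler_wpM2l ?(step_ge0 P_distr) // ler_wpM2l //.
exact: le_trans (IH y) (one_step_value_le y pol).
Qed.

Lemma lookahead_greedy pi n x : is_greedy Qs pi -> lookahead pi n x = V x.
Proof.
move=> greedy; elim: n x => [|n IH] x; first by rewrite lookahead0 one_step_value_greedy.
rewrite lookaheadS (eq_bigr (fun y => step P pi x y * gV y)) => [|y _]; last by rewrite IH.
by rewrite -(one_step_value_greedy x greedy) -lookahead0 /lookahead big_nat1 [alive_exp _ _ _ 1 x gV]alive_exp1.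
Qed.

Definition partial_return pi n := \sum_(1 <= t < n) exp_reward_at P r term s0 pi t.

Lemma partial_returnE pi n :
  partial_return pi n.+2 = lookahead pi n s0 - alive_exp P term pi n.+1 s0 gV.
Proof. by rewrite /lookahead addrK /partial_return big_add1. Qed.

Lemma lookahead_tail_cvg pi : is_policy pi ->
  (fun n => V s0 - alive_exp P term pi n.+1 s0 gV) @ \oo --> V s0.
Proof.
move=> pol; rewrite -[X in _ --> X]subr0; apply: cvgB; first exact: cvg_cst.
pose K := \sum_s `|gV s|.
apply: (@cvg_dominated0 _ _ (fun n => prob_T_ge P term s0 pi n.+1) K).
  by have := prob_T_ge_cvg0 finite_T pol.
move=> n; rewrite prob_T_ge_alive_exp; apply: alive_exp_norm_le => // y.
by rewrite /K (bigD1 y) //= lerDl sumr_ge0.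
Qed.

Lemma partial_return_cvg pi : is_policy pi -> cvgn (partial_return pi).
Proof.
move=> pol; pose K := \sum_s `|r s|.
have rK y : `|r y| <= K by rewrite /K (bigD1 y) //= lerDl sumr_ge0.
have cvg_ret : cvgn (series (fun t => exp_reward_at P r term s0 pi t.+1)).
  apply: normed_cvg.
  apply: (series_le_cvg _ _ _ (is_cvg_seriesZ (k := K) (cvg_series_prob_T_ge finite_T pol))) => n /=.
  - exact: normr_ge0.
  - change (0 <= K * prob_T_ge P term s0 pi n.+1).
    by rewrite mulr_ge0 ?prob_T_ge_alive_exp ?alive_exp_ge0 // (le_trans (normr_ge0 _) (rK s0)).
  - change (`|exp_reward_at P r term s0 pi n.+1| <= K * prob_T_ge P term s0 pi n.+1).
    by rewrite prob_T_ge_alive_exp; apply: alive_exp_norm_le.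
move: cvg_ret => /cvg_ex [l ret_l]; apply/cvg_ex; exists l.
rewrite -cvg_shiftS.
have -> : [sequence partial_return pi n.+1]_n = series (fun t => exp_reward_at P r term s0 pi t.+1).
  by apply: funext => n; rewrite /partial_return /= big_add1 /= seriesEnat.
exact: ret_l.
Qed.

Lemma J_greedy pi : is_greedy Qs pi -> J P r term s0 pi = V s0.
Proof.
move=> greedy; have ret2 : (fun n => partial_return pi n.+2) @ \oo --> V s0.
  rewrite (_ : (fun n => _) = (fun n => V s0 - alive_exp P term pi n.+1 s0 gV)).
    exact: lookahead_tail_cvg greedy.1.
  by apply: funext => n; rewrite partial_returnE lookahead_greedy.
have ret : partial_return pi @ \oo --> V s0 by rewrite -2!cvg_shiftS.
exact: cvg_lim ret.
Qed.

Lemma J_le pi : is_policy pi -> J P r term s0 pi <= V s0.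
Proof.
move=> pol; have /cvg_ex [l ret] := partial_return_cvg pol.
have ret2 : (fun n => partial_return pi n.+2) @ \oo --> l by move: ret; rewrite -2!cvg_shiftS.
rewrite /J (cvg_lim _ ret) //.
apply: (ler_cvg_to ret2 (lookahead_tail_cvg pol)); apply: nearW => n.
rewrite partial_returnE lerD2r.
exact: le_trans (lookahead_le _ _ pol) (one_step_value_le _ pol).
Qed.

Lemma bellman_fixed_optimal_Q : optimal_Q P r term s0 Qs.
Proof.
move=> pi greedy; split=> [|pi' pol']; first exact: greedy.1.
by rewrite (J_greedy greedy); apply: J_le.
Qed.

End Optimality.

Theorem theorem1 (R : realType) (S A : finType)
  (P : S -> A -> S -> R) (r : S -> R) (rho : S -> R) (term : {set S}) (s0 : S)
  (gamma : S -> R) :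
  is_ELP P rho term s0 ->
  (forall s, 0 <= gamma s <= 1) ->
  (forall s, s \in term -> gamma s < 1) ->
  exists Qstar : S -> A -> R,
    [/\ bellman P r gamma Qstar = Qstar,
        (forall Q : S -> A -> R, bellman P r gamma Q = Q -> Q = Qstar),
        (forall (Q : S -> A -> R) (s : S) (a : A),
            (fun n => iter n (bellman P r gamma) Q s a) @ \oo --> Qstar s a) &
        ((forall s, gamma s = gamma_epi R term s) ->
           optimal_Q P r term s0 Qstar)].
Proof.
move=> [[P_distr _] [_ s0_term] finite_T P_term reachable] gamma01 gamma_term.
have [pi [_ [pol _ _]]] := reachable s0.
have [a0 _] : exists a, true && (0 < pi s0 a).
  case: (pol s0) => pi_ge0 pi_sum1; apply: psumr_neq0P => [a _ //|].
  by rewrite pi_sum1; apply/eqP; rewrite oner_neq0.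
have [N discountN_lt1] :=
  max_discount_lt1 P_distr P_term s0_term finite_T a0 gamma01 gamma_term reachable.
have [c [c_ge0 c_lt1 discountN]] := bounded_away_from1 discountN_lt1.
have [Qs Qs_fixed] := bellman_fixed_exists a0 r P_distr gamma01 c_ge0 c_lt1 discountN.
exists Qs; split => //.
- by move=> Q BQ; apply: (bellman_fixed_unique a0 P_distr gamma01 c_ge0 c_lt1 discountN BQ).
- by move=> Q s a; apply: (bellman_iter_cvg a0 P_distr gamma01 c_ge0 c_lt1 discountN).
- by move=> gamma_epiE; apply: (bellman_fixed_optimal_Q P_distr finite_T gamma_epiE).
Qed.
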